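(* Let $q$ be a prime power, $t\ge1$, $F=\mathbb{F}_{q^t}$, $A\subseteq F$ with $|A|=n\le q^t$, and let $k$ satisfy $r=n-k\ge q^s$ for some integer $s<t$. Let $W=\{0,w_1,\dots,w_{q^s-1}\}$ be an $\mathbb{F}_q$-subspace of $F$ of dimension $s$, let $\alpha^*\in A$, let $\{\beta_1,\dots,\beta_t\}$ be an arbitrary $\mathbb{F}_q$-basis of $F$, and set \[ g_i(x)=\beta_i\prod_{j=1}^{q^s-1}\Big(x-\big(\alpha^*-w_j^{-1}\beta_i\big)\Big),\quad i=1,\dots,t. \] Then the check polynomials $g_1,\dots,g_t$ yield a linear repair scheme over $\mathbb{F}_q$ for the codeword symbol $f(\alpha^* )$ of the Reed-Solomon code $\mathrm{RS}(A,k)$ with repair bandwidth at most $(n-1)(t-s)\log_2 q$ bits. Moreover, when $n=|F|=q^t$ and $r=q^s$, this repair bandwidth is optimal among linear repair schemes over $\mathbb{F}_q$.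
   Context: $\mathrm{RS}(A,k)=\{(f(\alpha))_{\alpha\in A} : f\in F[x],\ \deg f<k\}$, with $f(\alpha)$ stored at node $\alpha$. Every polynomial $g\in F[x]$ of degree at most $r-1$ gives a dual codeword (a check): $\sum_{\alpha\in A}\lambda_\alpha g(\alpha)f(\alpha)=0$ for fixed nonzero multipliers $\lambda_\alpha$. Given checks $g_1,\dots,g_t$ of degree at most $r-1$ with $\mathrm{rank}_{\mathbb{F}_q}\{g_i(\alpha^* )\}_i=t$, one obtains a linear repair scheme over $\mathbb{F}_q$: applying $\mathrm{Tr}_{F/\mathbb{F}_q}$ to the check equations, the replacement node recovers $t$ independent traces of $f(\alpha^* )$ by downloading from each node $\alpha\ne\alpha^*$ exactly $b_\alpha=\mathrm{rank}_{\mathbb{F}_q}\{g_1(\alpha),\dots,g_t(\alpha)\}$ sub-symbols of $\mathbb{F}_q$; the repair bandwidth is $\sum_{\alpha\neq\alpha^*}b_\alpha$ sub-symbols, i.e. $\log_2 q$ times that many bits. In general a linear repair scheme over $\mathbb{F}_q$ is one where each node sends $\mathbb{F}_q$-linear functions of its symbol and $f(\alpha^* )$ is recovered $\mathbb{F}_q$-linearly; its bandwidth is the total amount downloaded. *)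

From HB Require Import structures.
From mathcomp Require Import all_boot all_order all_algebra all_field.
Set Implicit Arguments. Unset Strict Implicit. Unset Printing Implicit Defensive.
Import GRing.Theory.
Local Open Scope ring_scope.

Section Repair.
Variables (F0 : finFieldType) (L : fieldExtType F0).

(* A download plan: a list of (node, F_q-linear functional applied at that node).
   Each entry is one downloaded sub-symbol of F_q. *)
Definition download (D : seq (L * 'Hom(L, F0^o))) (f : {poly L}) : 'rV[F0]_(size D) :=
  \row_(j < size D) ((nth (0, 0%VF) D j).2 (f.[(nth (0, 0%VF) D j).1]) : F0).

(* Its bandwidth is size D sub-symbols. *)
Definition lin_repair_scheme (A : seq L) (k : nat) (astar : L)
    (D : seq (L * 'Hom(L, F0^o))) (rho : 'Hom('rV[F0]_(size D), L)) : Prop :=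
  (forall p, p \in D -> p.1 \in A /\ p.1 != astar) /\
  (forall f : {poly L}, (size f <= k)%N -> rho (download D f) = f.[astar]).

Definition check_poly (ws : seq L) (astar beta : L) : {poly L} :=
  beta *: \prod_(w <- ws) ('X - (astar - w^-1 * beta)%:P).

Definition node_bw (gs : seq {poly L}) (alpha : L) : nat :=
  \dim <<[seq g.[alpha] | g <- gs]>>%VS.

End Repair.

From HB Require Import structures.
From mathcomp Require Import all_boot all_order all_algebra all_field zify ring.
Import GRing.Theory.
Set Implicit Arguments. Unset Strict Implicit. Unset Printing Implicit Defensive.

(* At a node a, each check g_b is, up to the nonzero constant prod_w w^-1, the
   subspace polynomial of the F_q-space (a - astar) W evaluated at b.  Subspace
   polynomials are F_q-linear, so g_1(a), ..., g_t(a) span the image of a single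
   F_q-linear map of L.  At astar this map is the injective x |-> x^(q^s); at any
   other node it kills the s-dimensional space (a - astar) W.  Hence the rank is t at
   astar and at most t - s elsewhere, and applying a nonzero F_q-functional tau to the
   dual-codeword identities sum_a lambda_a g(a) f(a) = 0 turns these ranks into a
   repair scheme.
   For optimality, the recovery map rho yields at each node a the F_q-linear map
   theta |-> (tau (theta * rho e_j))_j, j ranging over the downloads from a, whose
   rank is at most the number of these downloads.  A nonzero theta lies in the kernels
   of at most q^s - 1 of these maps: otherwise the polynomial vanishing at the other
   nodes has degree < k, and recovering its value at astar contradicts tau != 0.
   Counting the pairs (a, theta) bounds sum_a q^(dim ker_a), and the convexity of
   z |-> q^z then bounds sum_a dim ker_a by (n - 1) s. *)

Lemma count_neq_uniq (T : eqType) (s : seq T) x :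
  uniq s -> x \in s -> count (fun y => y != x) s = (size s).-1.
Proof.
by move=> s_uniq xs; rewrite -(count_predC (pred1 x)) (count_uniq_mem _ s_uniq) xs add1n.
Qed.

Lemma bernoulli_expn q m : 0 < q -> (q - 1) * m + 1 <= q ^ m.
Proof.
move=> q_gt0; elim: m => [|m IHm]; first by rewrite muln0.
have : 1 <= q ^ m by rewrite expn_gt0 q_gt0.
rewrite expnS; nia.
Qed.

Lemma expnS_le_secant q m : 0 < q -> q ^ m.+1 <= q + (q - 1) * m * q ^ m.
Proof.
move=> q_gt0; elim: m => [|m IHm]; first by rewrite expn1 muln0 addn0.
have : 1 <= q ^ m by rewrite expn_gt0 q_gt0.
rewrite !expnS in IHm *; nia.
Qed.

(* The secant of z |-> q ^ z through s - 1 and s lies below the graph at every integer z. *)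
Lemma expn_secant q s z :
  0 < q -> q ^ s * (q - 1) * z + q ^ s.+1 <= q ^ z.+1 + q ^ s * (q - 1) * s.
Proof.
move=> q_gt0; case: (leqP s z) => [le_sz|lt_zs].
- have [m ->] : exists m, z = s + m by exists (z - s); lia.
  have h : (q - 1) * m + q <= q * q ^ m by have := bernoulli_expn m q_gt0; nia.
  have := leq_mul (leqnn (q ^ s)) h; rewrite !expnS expnD; nia.
- have [m ->] : exists m, s = z + m by exists (s - z); lia.
  have := leq_mul (leqnn (q ^ z)) (expnS_le_secant m q_gt0); rewrite !expnS expnD; nia.
Qed.

Lemma sum_le_of_sum_expn_le q s (l : seq nat) : 1 < q ->
  \sum_(z <- l) q ^ z <= size l * q ^ s -> \sum_(z <- l) z <= size l * s.
Proof.
move=> q_gt1 sum_exp_le.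
have secant_sum : \sum_(z <- l) (q ^ s * (q - 1) * z + q ^ s.+1)
    <= \sum_(z <- l) (q * q ^ z + q ^ s * (q - 1) * s).
  by apply: leq_sum => z _; rewrite -expnS; apply: expn_secant; apply: ltnW.
rewrite !big_split /= -!big_distrr /= !big_const_seq !count_predT !iter_addn_0 in secant_sum.
have pos : 0 < q ^ s * (q - 1) by rewrite muln_gt0 expn_gt0 ltnW //= subn_gt0.
rewrite -(leq_pmul2l pos); move: secant_sum (leq_mul (leqnn q) sum_exp_le).
set S := \sum_(z <- l) z; set T := \sum_(z <- l) q ^ z; rewrite expnS; nia.
Qed.

Local Open Scope ring_scope.

Section LinearMaps.
Variables (K : fieldType) (aT rT : vectType K).

Lemma linfunE (f : aT -> rT) : linear f -> linfun f =1 f.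
Proof. by move=> fL; exact: (lfunE (HB.pack f (GRing.isLinear.Build _ _ _ _ f fL))). Qed.

Lemma lfun_factor (wT : vectType K) (f : 'Hom(aT, rT)) (g : 'Hom(aT, wT)) :
  (lker f <= lker g)%VS -> exists h : 'Hom(rT, wT), (h \o f)%VF = g.
Proof.
move=> /subvP kerfg; exists (g \o f^-1)%VF; apply/lfunP => u; rewrite !comp_lfunE.
have : f^-1%VF (f u) - u \in lker f.
  by rewrite memv_ker linearB /= limg_lfunVK ?memv_img ?memvf // subrr.
by move/kerfg; rewrite memv_ker linearB /= subr_eq0 => /eqP.
Qed.

Lemma exists_nonzero_functional : (0 < \dim {:aT})%N -> exists tau : 'Hom(aT, K^o), tau != 0.
Proof.
move=> dim_gt0; pose i := Ordinal dim_gt0.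
exists (linfun (coord (vbasis fullv) i : aT -> K^o)).
apply/eqP => /lfunP/(_ (vbasis fullv)`_i); rewrite lfunE zero_lfunE /=.
by rewrite (coord_free i i (basis_free (vbasisP _))) eqxx => /eqP; rewrite oner_eq0.
Qed.

End LinearMaps.

Section FiniteFieldExtension.
Variables (F0 : finFieldType) (L : fieldExtType F0).

Lemma lfun_mulr_eq0 (tau : 'Hom(L, F0^o)) x :
  tau != 0 -> (forall y, tau (y * x) = 0) -> x = 0.
Proof.
move=> tau0 tau_x; apply: contraNeq tau0 => x0; apply/eqP/lfunP => z.
by rewrite zero_lfunE -(divfK x0 z) tau_x.
Qed.

Lemma pchar_nat_card_pow m : [pchar L].-nat (#|F0| ^ m)%N.
Proof.
have [p p_pr pchF0] := finPcharP F0.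
have pchL : p \in [pchar L] by apply: (rmorph_pchar (in_alg L)).
by rewrite (card_pprimeChar pchF0) -expnM pnatX pnatE // pchL.
Qed.

Lemma exprD_card_pow m (x y : L) :
  (x + y) ^+ (#|F0| ^ m) = x ^+ (#|F0| ^ m) + y ^+ (#|F0| ^ m).
Proof. exact: exprDn_pchar (pchar_nat_card_pow m). Qed.

Lemma expr_card_pow_scalar m (a : F0) : (a%:A : L) ^+ (#|F0| ^ m) = a%:A.
Proof.
rewrite -(rmorphXn (in_alg L)) /=; congr (_%:A).
by elim: m => [|m IHm]; rewrite ?expr1 // expnSr exprM expf_card IHm.
Qed.

End FiniteFieldExtension.

Lemma size_sub_monic_lt (R : nzRingType) (p q : {poly R}) :
  p \is monic -> q \is monic -> size p = size q -> (size (p - q)%R < size p)%N.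
Proof.
move=> mp mq spq; have sp_gt0 : (0 < size p)%N by rewrite size_poly_gt0 monic_neq0.
rewrite -(prednK sp_gt0) ltnS; apply/leq_sizeP => j.
rewrite leq_eqVlt => /predU1P [<-|lt_pj]; rewrite coefB.
  by rewrite {2}spq -!lead_coefE (monicP mp) (monicP mq) subrr.
by rewrite !nth_default ?subrr // -?spq (leq_trans _ lt_pj) // leqSpred.
Qed.

Section SubspacePolynomial.
Variables (F0 : finFieldType) (L : fieldExtType F0) (W : {vspace L}) (Ws : seq L).
Hypotheses (Ws_uniq : uniq Ws) (mem_Ws : Ws =i W).

Lemma size_Ws : size Ws = (#|F0| ^ \dim W)%N.
Proof.
rewrite -(card_vspace (W : {vspace finvect_type L})).
by rewrite -(card_uniqP (Ws_uniq : uniq (Ws : seq (finvect_type L)))); apply: eq_card.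
Qed.

Lemma perm_map_Ws (f : L -> L) :
  injective f -> {in W, forall w, f w \in W} -> perm_eq [seq f w | w <- Ws] Ws.
Proof.
move=> f_inj fW; have fWs_uniq : uniq [seq f w | w <- Ws] by rewrite map_inj_uniq.
have fWs_sub : {subset [seq f w | w <- Ws] <= Ws}.
  by move=> _ /mapP [w wW ->]; rewrite mem_Ws fW -?mem_Ws.
by apply: uniq_perm => //; apply: (uniq_min_size fWs_uniq fWs_sub _).2; rewrite size_map.
Qed.

Definition subspace_prod (d x : L) := \prod_(w <- Ws) (x + d * w).

Lemma subspace_prod_shift d c x : c \in W -> subspace_prod d (x + d * c) = subspace_prod d x.
Proof.
move=> cW; rewrite /subspace_prod -[RHS](perm_big _ (perm_map_Ws (addIr c) _)).
  by rewrite big_map; apply: eq_bigr => w _; ring.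
by move=> w wW; rewrite rpredD.
Qed.

Lemma subspace_prod_root d c : c \in W -> subspace_prod d (d * c) = 0.
Proof.
move=> cW; rewrite -[d * c]add0r subspace_prod_shift //.
by rewrite /subspace_prod (bigD1_seq 0) ?mem_Ws ?mem0v //= mulr0 addr0 mul0r.
Qed.

Lemma subspace_prod0 x : subspace_prod 0 x = x ^+ (#|F0| ^ \dim W).
Proof.
rewrite /subspace_prod (eq_bigr (fun=> x)) => [|w _]; last by rewrite mul0r addr0.
by rewrite big_const_seq count_predT iter_mulr_1 size_Ws.
Qed.

(* For d != 0, the additivity defect is a polynomial of degree < |W| vanishing on dW. *)
Lemma subspace_prodD d x y :
  subspace_prod d (x + y) = subspace_prod d x + subspace_prod d y.
Proof.
have [->|d0] := eqVneq d 0; first by rewrite !subspace_prod0 exprD_card_pow.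
pose P z : {poly L} := \prod_(w <- Ws) ('X - (- (z + d * w))%:P).
have P_horner z u : (P z).[u] = subspace_prod d (u + z).
  by rewrite horner_prod; apply: eq_bigr => w _; rewrite hornerXsubC opprK addrA.
have P_monic z : P z \is monic by apply: monic_prod_XsubC.
have size_P z : size (P z) = (size Ws).+1 by rewrite size_prod_XsubC.
pose Q := P y - P 0 - (subspace_prod d y)%:P.
suff /(congr1 (horner^~ x)) : Q = 0.
  rewrite !hornerE !P_horner addr0 => /eqP.
  by rewrite -addrA -opprD subr_eq0 => /eqP.
apply: (roots_geq_poly_eq0 (rs := [seq d * w | w <- Ws])).
- apply/allP => _ /mapP [w wW ->]; rewrite /root !hornerE !P_horner addr0.
  rewrite [d * w + y]addrC subspace_prod_shift -?mem_Ws // subspace_prod_root -?mem_Ws //.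
  by rewrite subr0 subrr.
- by rewrite map_inj_uniq // => u v /(mulfI d0).
rewrite size_map; apply: leq_trans (size_polyD _ _) _; rewrite size_polyN size_polyC geq_max.
rewrite -ltnS -(size_P y) size_sub_monic_lt ?size_P //=.
by rewrite (leq_trans (leq_b1 _)) // size_Ws expn_gt0 (ltnW (finNzRing_gt1 F0)).
Qed.

Lemma subspace_prodZ d (a : F0) x : subspace_prod d (a *: x) = a *: subspace_prod d x.
Proof.
have [->|a0] := eqVneq a 0.
  by rewrite !scale0r -[0 in LHS](mulr0 d) subspace_prod_root ?mem0v.
have Wa w : w \in W -> a^-1 *: w \in W by move=> wW; rewrite rpredZ.
rewrite /subspace_prod -[in RHS](perm_big _ (perm_map_Ws (scalerI _) Wa)) ?invr_eq0 //.
have scale_factor w : a *: x + d * w = a%:A * (x + d * (a^-1 *: w)).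
  by rewrite mulrDr mulr_algl -scalerAr mulr_algl scalerA divff // scale1r.
rewrite big_map (eq_bigr _ (fun w _ => scale_factor w)) big_split /=.
by rewrite big_const_seq count_predT iter_mulr_1 size_Ws expr_card_pow_scalar mulr_algl.
Qed.

Lemma subspace_prod_is_linear d : linear (subspace_prod d).
Proof. by move=> a x y; rewrite subspace_prodD subspace_prodZ. Qed.

End SubspacePolynomial.

Section CheckPolynomials.
Variables (F0 : finFieldType) (L : fieldExtType F0) (W : {vspace L}) (ws : seq L) (astar : L).
Hypotheses (ws_uniq : uniq ws) (mem_ws : forall x, x \in ws <-> x \in W /\ x != 0).
Variable beta : seq L.
Hypothesis beta_basis : basis_of fullv beta.

Let Ws := 0 :: ws.
Let gs := [seq check_poly ws astar b | b <- beta].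

Let mem_Ws : Ws =i W.
Proof.
move=> x; rewrite inE; have [->|x0] /= := eqVneq x 0; first by rewrite mem0v.
by apply/idP/idP => [/mem_ws []|xW] //; apply/mem_ws.
Qed.

Let uniq_Ws : uniq Ws.
Proof. by rewrite /= ws_uniq andbT; apply/negP => /mem_ws [_ /eqP]. Qed.

Lemma size_check_polys g : g \in gs -> (size g <= #|F0| ^ \dim W)%N.
Proof.
move=> /mapP [b _ ->]; apply: leq_trans (size_scale_leq _ _) _.
by rewrite size_prod_XsubC -(size_Ws uniq_Ws mem_Ws).
Qed.

Let c := \prod_(w <- ws) w^-1.

(* Pulling w^-1 out of each factor turns g_b(a) into the subspace polynomial
   of (a - astar) W at b. *)
Let horner_check_poly b a : (check_poly ws astar b).[a] = c * subspace_prod Ws (a - astar) b.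
Proof.
rewrite hornerZ horner_prod /subspace_prod big_cons mulr0 addr0 mulrCA -big_split /=.
congr (_ * _); apply: eq_big_seq => w /mem_ws [_ w0].
by rewrite hornerXsubC mulrDr mulrCA mulVf // mulr1 opprB addrCA.
Qed.

Let check_map d : 'End(L) := linfun (fun x => c * subspace_prod Ws d x).

Let check_mapE d x : check_map d x = c * subspace_prod Ws d x.
Proof.
apply: linfunE => a y z.
by rewrite (subspace_prod_is_linear uniq_Ws mem_Ws) mulrDr scalerAr.
Qed.

Let node_bw_check_polys a : node_bw gs a = \dim (limg (check_map (a - astar))).
Proof.
rewrite /node_bw -map_comp -(span_basis beta_basis) limg_span; congr (\dim <<_>>).
by apply: eq_map => b /=; rewrite check_mapE horner_check_poly.
Qed.

Let c_neq0 : c != 0.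
Proof. by rewrite prodf_seq_neq0; apply/allP => w /mem_ws [_ w0]; rewrite invr_eq0. Qed.

Lemma node_bw_check_polys_astar : node_bw gs astar = \dim {:L}.
Proof.
rewrite node_bw_check_polys subrr; apply: limg_dim_eq.
rewrite capfv; apply/eqP; rewrite -subv0; apply/subvP => x.
rewrite memv_ker check_mapE (subspace_prod0 uniq_Ws mem_Ws) mulf_eq0 (negPf c_neq0).
by rewrite expf_eq0 memv0 => /andP [].
Qed.

Lemma node_bw_check_polys_neq a :
  a != astar -> (node_bw gs a <= \dim {:L} - \dim W)%N.
Proof.
rewrite -subr_eq0 node_bw_check_polys; set d := a - astar => d0.
have := limg_ker_dim (check_map d) fullv; rewrite capfv => <-.
suff : (\dim W <= \dim (lker (check_map d)))%N by lia.
rewrite -(limg_dim_eq (f := amull d)) ?(eqP (lker0_amull _)) ?capv0 ?unitfE //.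
apply: dimvS; apply/subvP => _ /memv_imgP [w wW ->].
by rewrite lfunE memv_ker check_mapE (subspace_prod_root uniq_Ws mem_Ws) ?mulr0.
Qed.

End CheckPolynomials.

Section DualCodewords.
Variables (K : fieldType) (A : seq K).
Hypothesis A_uniq : uniq A.

Definition dual_weight a := (\prod_(b <- A | b != a) (a - b))^-1.
Definition node_poly a : {poly K} := \prod_(b <- A | b != a) ('X - b%:P).

Lemma dual_weight_neq0 a : dual_weight a != 0.
Proof.
rewrite invr_eq0 prodf_seq_neq0; apply/allP => b _; apply/implyP => ba.
by rewrite subr_eq0 eq_sym.
Qed.

Lemma size_node_poly a : a \in A -> size (node_poly a) = size A.
Proof.
move=> aA; rewrite /node_poly -big_filter size_prod_XsubC size_filter.
by rewrite count_neq_uniq //; case: (A) aA.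
Qed.

Lemma node_poly_monic a : node_poly a \is monic.
Proof. exact: monic_prod_XsubC. Qed.

Lemma horner_node_poly a c :
  c \in A -> dual_weight a * (node_poly a).[c] = (c == a)%:R.
Proof.
move=> cA; rewrite horner_prod; have [->|ca] := eqVneq c a.
  rewrite (eq_bigr (fun b => a - b)) => [|b _]; last by rewrite hornerXsubC.
  by rewrite mulVf // -invr_eq0 dual_weight_neq0.
rewrite -big_filter (bigD1_seq c) ?mem_filter ?ca ?filter_uniq //=.
by rewrite hornerXsubC subrr mul0r mulr0.
Qed.

Lemma lagrange_interpolation (h : {poly K}) : (size h <= size A)%N ->
  h = \sum_(a <- A) (dual_weight a * h.[a]) *: node_poly a.
Proof.
move=> sh; set H := \sum_(a <- A) _; apply/eqP; rewrite eq_sym -subr_eq0; apply/eqP.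
apply: (roots_geq_poly_eq0 (rs := A)) => //.
  apply/allP => c cA; rewrite /root !hornerE horner_sum (bigD1_seq c) //= big_seq_cond.
  rewrite big1 => [|a /andP [_ ac]]; last first.
    by rewrite hornerZ mulrAC horner_node_poly // eq_sym (negPf ac) mul0r.
  by rewrite addr0 hornerZ mulrAC horner_node_poly // eqxx mul1r subrr.
apply: leq_trans (size_polyD _ _) _; rewrite size_polyN geq_max sh andbT.
rewrite /H big_seq; apply: (big_ind (fun p : {poly K} => size p <= size A)%N) => [|p q sp sq|a aA].
- by rewrite size_poly0.
- by apply: leq_trans (size_polyD _ _) _; rewrite geq_max sp.
- by apply: leq_trans (size_scale_leq _ _) _; rewrite size_node_poly.
Qed.

Lemma sum_dual_weight (h : {poly K}) :
  (size h < size A)%N -> \sum_(a <- A) dual_weight a * h.[a] = 0.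
Proof.
move=> sh; have /(congr1 (coefp (size A).-1)) /= := lagrange_interpolation (ltnW sh).
rewrite coef_sum nth_default => [coef_eq|]; last by rewrite -ltnS (ltn_predK sh).
rewrite [RHS]coef_eq; apply: eq_big_seq => a aA; rewrite coefZ -(size_node_poly aA).
by rewrite -lead_coefE (monicP (node_poly_monic a)) mulr1.
Qed.

End DualCodewords.

Lemma download_eq0_mem (F0 : finFieldType) (L : fieldExtType F0)
    (D : seq (L * 'Hom(L, F0^o))) f :
  download D f = 0 -> forall p, p \in D -> p.2 f.[p.1] = 0.
Proof.
move=> /rowP D0 p pD; have pD' : (index p D < size D)%N by rewrite index_mem.
by have := D0 (Ordinal pD'); rewrite !mxE nth_index.
Qed.

Section PolynomialsOfBoundedSize.
Variables (R : comNzRingType) (k : nat).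

Definition poly_of_coefs (u : {ffun 'I_k -> R}) : {poly R} := \sum_(i < k) u i *: 'X^i.

Lemma horner_poly_of_coefs u x : (poly_of_coefs u).[x] = \sum_(i < k) u i * x ^+ i.
Proof. by rewrite horner_sum; apply: eq_bigr => i _; rewrite hornerZ hornerXn. Qed.

Lemma size_poly_of_coefs u : (size (poly_of_coefs u) <= k)%N.
Proof.
apply/leq_sizeP => j le_kj; rewrite coef_sum big1 // => i _.
by rewrite coefZ coefXn (gtn_eqF (leq_trans (ltn_ord i) le_kj)) mulr0.
Qed.

Lemma poly_of_coefsK (f : {poly R}) :
  (size f <= k)%N -> poly_of_coefs [ffun i : 'I_k => f`_i] = f.
Proof.
move=> sf; rewrite /poly_of_coefs (eq_bigr (fun i : 'I_k => f`_i *: 'X^i)) => [|i _].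
  rewrite -poly_def; apply/polyP => i; rewrite coef_poly.
  by case: ltnP => // le_ki; rewrite nth_default // (leq_trans sf le_ki).
by rewrite ffunE.
Qed.

End PolynomialsOfBoundedSize.

Lemma horner_poly_of_coefs_is_linear (K : fieldType) (L : fieldExtType K) k (x : L) :
  linear (fun u : {ffun 'I_k -> L} => (poly_of_coefs u).[x]).
Proof.
move=> c u v; rewrite !horner_poly_of_coefs scaler_sumr -big_split.
by apply: eq_bigr => i _; rewrite !ffunE mulrDl scalerAl.
Qed.

Section TraceRepair.
Variables (F0 : finFieldType) (L : fieldExtType F0) (A : seq L) (k : nat) (astar : L).
Variables (gs : seq {poly L}) (tau : 'Hom(L, F0^o)).
Hypotheses (A_uniq : uniq A) (astar_A : astar \in A).
Hypothesis size_gs : forall g, g \in gs -> (size g + k <= size A)%N.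
Hypothesis node_bw_astar : node_bw gs astar = \dim {:L}.
Hypothesis tau_neq0 : tau != 0.

Let A' := [seq a <- A | a != astar].
Let B a := <<[seq g.[a] | g <- gs]>>%VS.

Definition trace_download a b : L * 'Hom(L, F0^o) :=
  (a, (tau \o amull (dual_weight A a * b))%VF).

Definition trace_downloads : seq (L * 'Hom(L, F0^o)) :=
  flatten [seq [seq trace_download a b | b <- vbasis (B a)] | a <- A'].

Lemma size_trace_downloads :
  size trace_downloads = (\sum_(a <- A | a != astar) node_bw gs a)%N.
Proof.
rewrite size_flatten /shape -map_comp sumnE big_map big_filter.
by apply: eq_bigr => a _; rewrite /= size_map size_tuple.
Qed.

Lemma trace_downloads_nodes p : p \in trace_downloads -> p.1 \in A /\ p.1 != astar.
Proof.
by move=> /flatten_mapP [a + /mapP [b _ ->]]; rewrite mem_filter => /andP [].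
Qed.

Let trace_form f a : 'Hom(L, F0^o) := (tau \o amull (dual_weight A a * f.[a]))%VF.

Lemma trace_form_ker f a :
  download trace_downloads f = 0 -> a \in A' -> (B a <= lker (trace_form f a))%VS.
Proof.
move=> D0 aA'; rewrite -[B a](span_basis (vbasisP (B a))); apply/span_subvP => b bB.
have bD : trace_download a b \in trace_downloads.
  by apply/flatten_mapP; exists a => //; apply: map_f.
have := download_eq0_mem D0 bD; rewrite /= !comp_lfunE !lfunE /= => tau0.
by rewrite memv_ker comp_lfunE lfunE /= mulrAC tau0.
Qed.

Lemma horner_eq0_of_download_eq0 (f : {poly L}) :
  (size f <= k)%N -> download trace_downloads f = 0 -> f.[astar] = 0.
Proof.
move=> sf D0; have B_full : B astar = fullv.
  by apply/eqP; rewrite eqEdim subvf /= -/(node_bw gs astar) node_bw_astar.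
have : (B astar <= lker (trace_form f astar))%VS.
  apply/span_subvP => _ /mapP [g gs_g ->]; rewrite memv_ker comp_lfunE lfunE /=.
  have size_gf : (size (g * f)%R < size A)%N.
    have A_gt0 : (0 < size A)%N by case: (A) astar_A.
    by apply: leq_ltn_trans (size_polyMleq _ _) _; have := size_gs gs_g; lia.
  have := sum_dual_weight A_uniq size_gf; rewrite (bigD1_seq astar) //= => /eqP.
  rewrite addr_eq0 mulrAC -mulrA -hornerM => /eqP ->; rewrite linearN linear_sum /=.
  rewrite big_seq_cond big1 ?oppr0 // => a /andP [a_A a_neq].
  have aA' : a \in A' by rewrite mem_filter a_neq.
  have gaB : g.[a] \in B a by apply: memv_span; apply: map_f.
  move: (subvP (trace_form_ker D0 aA') _ gaB); rewrite memv_ker comp_lfunE lfunE /=.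
  by rewrite hornerM [g.[a] * _]mulrC mulrA => /eqP.
rewrite B_full => /subvP trace_form0.
have : dual_weight A astar * f.[astar] = 0.
  apply: (lfun_mulr_eq0 tau_neq0) => y; have := trace_form0 y (memvf y).
  by rewrite memv_ker comp_lfunE lfunE /= mulrC => /eqP.
by move/eqP; rewrite mulf_eq0 (negPf (dual_weight_neq0 _ _)) => /eqP.
Qed.

Lemma trace_repair_scheme : exists rho, lin_repair_scheme A k astar (D := trace_downloads) rho.
Proof.
pose Psi := linfun (fun u : {ffun 'I_k -> L} => download trace_downloads (poly_of_coefs u)).
pose Psi_astar := linfun (fun u : {ffun 'I_k -> L} => (poly_of_coefs u).[astar] : L).
have PsiE u : Psi u = download trace_downloads (poly_of_coefs u).
  apply: linfunE => c u1 u2; apply/rowP => j; rewrite !mxE.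
  by rewrite horner_poly_of_coefs_is_linear linearP.
have Psi_astarE u : Psi_astar u = (poly_of_coefs u).[astar].
  exact/linfunE/horner_poly_of_coefs_is_linear.
have [rho rhoE] : exists rho, (rho \o Psi)%VF = Psi_astar.
  apply: lfun_factor; apply/subvP => u; rewrite !memv_ker PsiE Psi_astarE => /eqP D0.
  by rewrite (horner_eq0_of_download_eq0 (size_poly_of_coefs u) D0).
exists rho; split=> [p /trace_downloads_nodes //|f sf].
have := congr1 (fun h : 'Hom(_, _) => h [ffun i : 'I_k => f`_i]) rhoE.
by rewrite /= comp_lfunE PsiE Psi_astarE poly_of_coefsK.
Qed.

End TraceRepair.

Lemma repair_scheme_of_checks (F0 : finFieldType) (L : fieldExtType F0)
    (A : seq L) (k : nat) (astar : L) (gs : seq {poly L}) :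
  uniq A -> astar \in A -> (forall g, g \in gs -> (size g + k <= size A)%N) ->
  node_bw gs astar = \dim {:L} ->
  exists (D : seq (L * 'Hom(L, F0^o))) (rho : 'Hom('rV[F0]_(size D), L)),
    lin_repair_scheme A k astar rho /\ size D = (\sum_(a <- A | a != astar) node_bw gs a)%N.
Proof.
move=> A_uniq astar_A size_gs bw_astar.
have [tau tau_neq0] := exists_nonzero_functional (adim_gt0 {:L}%AS).
have [rho scheme] := trace_repair_scheme A_uniq astar_A size_gs bw_astar tau_neq0.
by exists (trace_downloads A astar gs tau), rho; rewrite size_trace_downloads.
Qed.

Section LowerBound.
Variables (F0 : finFieldType) (L : fieldExtType F0) (A : seq L) (k s : nat) (astar : L).
Variables (D : seq (L * 'Hom(L, F0^o))) (rho : 'Hom('rV[F0]_(size D), L)).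
Hypotheses (A_uniq : uniq A) (astar_A : astar \in A).
Hypothesis size_A : size A = (#|F0| ^ \dim {:L})%N.
Hypothesis redundancy : (size A - k)%N = (#|F0| ^ s)%N.
Hypothesis scheme : lin_repair_scheme A k astar rho.

Let A' := [seq a <- A | a != astar].
Let entry (j : 'I_(size D)) := nth (0, 0%VF) D j.
Let node j := (entry j).1.
Let recovery_coef j := rho (delta_mx 0 j).

Let size_A' : size A' = (size A).-1.
Proof. by rewrite size_filter count_neq_uniq. Qed.

Let node_A' j : node j \in A'.
Proof.
by case: scheme => /(_ (entry j) (mem_nth _ (ltn_ord j))) [? ?] _; rewrite mem_filter; apply/andP.
Qed.

Lemma repair_expansion (f : {poly L}) : (size f <= k)%N ->
  f.[astar] = \sum_j (entry j).2 f.[node j] *: recovery_coef j.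
Proof.
case: scheme => _ recover /recover <-; rewrite [download D f]row_sum_delta linear_sum.
by apply: eq_bigr => j _; rewrite linearZ mxE.
Qed.

Let load a := #|[pred j : 'I_(size D) | node j == a]|.

Lemma sum_load : (\sum_(a <- A') load a <= size D)%N.
Proof.
rewrite /load; under eq_bigr do rewrite -sum1_card big_mkcond /=.
rewrite exchange_big /= -[X in (_ <= X)%N]card_ord -sum1_card; apply: leq_sum => j _.
rewrite -big_mkcond /= sum1_count (@eq_count _ _ (pred1 (node j))) => [|a]; last first.
  by rewrite !inE eq_sym.
by rewrite (count_uniq_mem _ (filter_uniq _ A_uniq)) leq_b1.
Qed.

Section Functional.
Variable tau : 'Hom(L, F0^o).
Hypothesis tau_neq0 : tau != 0.

Definition node_map a : 'Hom(L, 'rV[F0]_(size D)) :=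
  linfun (fun th => \row_j (if node j == a then tau (th * recovery_coef j) else 0)).

Let node_mapE a th :
  node_map a th = \row_j (if node j == a then tau (th * recovery_coef j) else 0).
Proof.
apply: linfunE => c x y; apply/rowP => j; rewrite !mxE.
by case: ifP => _; rewrite ?mulr0 ?addr0 // mulrDl -scalerAl linearP.
Qed.

Lemma dim_lker_node_map a : (\dim {:L} - \dim (lker (node_map a)) <= load a)%N.
Proof.
have := limg_ker_dim (node_map a) fullv; rewrite capfv => <-; rewrite addKn.
pose E := [seq delta_mx 0 j : 'rV[F0]_(size D) | j <- enum [pred j | node j == a]].
have img_sub : (limg (node_map a) <= <<E>>)%VS.
  apply/subvP => _ /memv_imgP [th _ ->]; rewrite node_mapE (row_sum_delta (\row_j _)).
  apply: rpred_sum => j _; rewrite mxE; case: ifP => [node_j|]; last by rewrite scale0r mem0v.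
  by apply/rpredZ/memv_span/map_f; rewrite mem_enum inE node_j.
by apply: leq_trans (dimvS img_sub) _; apply: leq_trans (dim_span _) _; rewrite size_map -cardE.
Qed.

Lemma count_lker_node_map th : th != 0 ->
  (count (fun a => th \in lker (node_map a)) A' <= #|F0| ^ s - 1)%N.
Proof.
move=> th0; rewrite leqNgt; apply/negP => many.
pose N := [seq a <- A' | th \notin lker (node_map a)].
pose f0 := \prod_(b <- N) ('X - b%:P).
have size_f0 : (size f0 <= k)%N.
  rewrite size_prod_XsubC size_filter.
  have : (count (fun a => th \notin lker (node_map a)) A'
          + count (fun a => th \in lker (node_map a)) A' = size A')%N.
    by rewrite addnC count_predC.
  have : (0 < #|F0| ^ s)%N by rewrite expn_gt0 (ltnW (finNzRing_gt1 F0)).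
  lia.
have f0_astar : f0.[astar] != 0.
  rewrite horner_prod prodf_seq_neq0; apply/allP => b; rewrite !mem_filter hornerXsubC.
  by case/and3P => _ b_neq _; rewrite subr_eq0 eq_sym.
suff : th * f0.[astar] = 0 by move/eqP; rewrite mulf_eq0 (negPf th0) (negPf f0_astar).
apply: (lfun_mulr_eq0 tau_neq0) => y.
rewrite mulrCA -hornerZ (repair_expansion (leq_trans (size_scale_leq _ _) size_f0)).
rewrite mulr_sumr linear_sum big1 //= => j _; rewrite -scalerAr linearZ /=.
have [th_ker|th_nker] := boolP (th \in lker (node_map (node j))).
  move: th_ker; rewrite memv_ker node_mapE => /eqP/rowP/(_ j).
  by rewrite !mxE eqxx => ->; rewrite scaler0.
have N_j : node j \in N by rewrite mem_filter th_nker node_A'.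
rewrite hornerZ horner_prod (bigD1_seq (node j)) ?filter_uniq //=.
by rewrite hornerXsubC subrr mul0r mulr0 linear0 scale0r.
Qed.

(* Double counting of the pairs (a, th) with th != 0 in the kernel of node_map a. *)
Lemma sum_card_lker_node_map :
  (\sum_(a <- A') (#|F0| ^ \dim (lker (node_map a)) - 1)
     <= (#|F0| ^ \dim {:L} - 1) * (#|F0| ^ s - 1))%N.
Proof.
pose LF := finvect_type L.
have card_lker a : (#|F0| ^ \dim (lker (node_map a)) - 1
                    = \sum_(x : LF) ((x \in lker (node_map a)) && (x != 0%R)))%N.
  rewrite -(card_vspace (lker (node_map a) : {vspace LF})) (cardD1 0) mem0v add1n subn1 /=.
  rewrite -sum1_card big_mkcond /=; apply: eq_bigr => x _.
  by rewrite !inE andbC; case: (_ && _).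
rewrite (eq_bigr _ (fun a _ => card_lker a)) exchange_big /=.
apply: (@leq_trans (\sum_(x : LF) ((x != 0%R) * (#|F0| ^ s - 1)))%N).
  apply: leq_sum => x _; case: (boolP (x != 0%R)) => x0; last first.
    by rewrite big1 // => a _; rewrite andbF.
  rewrite mul1n (eq_bigr (fun a => if x \in lker (node_map a) then 1 else 0)%N) => [|a _].
    by rewrite -big_mkcond sum1_count count_lker_node_map.
  by rewrite andbT; case: (_ \in _).
rewrite -big_distrl leq_mul2r /=; apply/orP; right.
rewrite (eq_bigr (fun x => if x != 0%R then 1 else 0)%N) => [|x _]; last by case: (_ != _).
rewrite -big_mkcond sum1_card cardC1 subn1 -(card_vspace (fullv : {vspace LF})).
by apply/eq_leq; congr _.-1; apply: eq_card => x; rewrite memvf.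
Qed.

End Functional.

Lemma lin_repair_bandwidth_ge : ((size A - 1) * (\dim {:L} - s) <= size D)%N.
Proof.
have [tau tau_neq0] := exists_nonzero_functional (adim_gt0 {:L}%AS).
set t := \dim {:L}; set q := #|F0|; pose z a := \dim (lker (node_map tau a)).
have q_gt1 : (1 < q)%N := finNzRing_gt1 F0.
have sum_expn : (\sum_(a <- A') q ^ z a <= size A' * q ^ s)%N.
  have -> : (\sum_(a <- A') q ^ z a = \sum_(a <- A') (q ^ z a - 1) + size A')%N.
    rewrite -sum1_size -big_split; apply: eq_bigr => a _.
    by apply/esym/subnK; rewrite expn_gt0 ltnW.
  have := sum_card_lker_node_map tau_neq0; rewrite -/q -/t size_A' size_A -subn1.
  have : (0 < q ^ s)%N by rewrite expn_gt0 ltnW.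
  set S := (\sum_(a <- A') _)%N; set Qt := (q ^ t)%N; set Qs := (q ^ s)%N; nia.
have sum_z : (\sum_(a <- A') z a <= size A' * s)%N.
  by have := @sum_le_of_sum_expn_le q s (map z A') q_gt1; rewrite !big_map size_map; apply.
have sum_rank : (\sum_(a <- A') (t - z a) <= size D)%N.
  apply: leq_trans _ sum_load; apply: leq_sum => a _; exact: dim_lker_node_map.
have sum_split : (\sum_(a <- A') (t - z a) + \sum_(a <- A') z a = size A' * t)%N.
  rewrite -big_split /= (eq_bigr (fun=> t)) => [|a _]; last by rewrite subnK ?dimvS ?subvf.
  by rewrite big_const_seq count_predT iter_addn_0 mulnC.
rewrite subn1 -size_A' mulnBr; lia.
Qed.

End LowerBound.

Unset Implicit Arguments.
Theorem theorem3 (F0 : finFieldType) (L : fieldExtType F0)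
    (A : seq L) (k s : nat) (astar : L) (W : {vspace L}) (ws : seq L)
    (beta : seq L) :
  let q := #|F0| in
  let t := \dim {: L} in
  let n := size A in
  let r := (n - k)%N in
  uniq A ->
  (s < t)%N ->
  (q ^ s <= r)%N ->
  \dim W = s ->
  uniq ws ->
  (forall x, x \in ws <-> x \in W /\ x != 0) ->
  astar \in A ->
  basis_of {: L} beta ->
  let gs := [seq check_poly ws astar b | b <- beta] in
  (* the g_i are checks (degree <= r - 1) with full rank t at astar *)
  [/\ (forall g, g \in gs -> (size g <= r)%N),
      node_bw gs astar = t,
      (\sum_(a <- A | a != astar) node_bw gs a <= (n - 1) * (t - s))%N,
      (* they yield a linear repair scheme of bandwidth <= (n-1)(t-s) sub-symbols *)
      (exists (D : seq (L * 'Hom(L, F0^o))) (rho : 'Hom('rV[F0]_(size D), L)),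
          lin_repair_scheme A k astar rho /\ (size D <= (n - 1) * (t - s))%N)
    & (* optimality for full length n = q^t and r = q^s *)
      (n = q ^ t)%N -> r = (q ^ s)%N ->
      forall (D : seq (L * 'Hom(L, F0^o))) (rho : 'Hom('rV[F0]_(size D), L)),
        lin_repair_scheme A k astar rho -> ((n - 1) * (t - s) <= size D)%N].
Proof.
move=> q t n r A_uniq _ qs_le_r dimW ws_uniq mem_ws astar_A beta_basis gs.
have size_gs g : g \in gs -> (size g <= r)%N.
  by move/(size_check_polys ws_uniq mem_ws); rewrite dimW => /leq_trans; apply.
have bw_astar : node_bw gs astar = t := node_bw_check_polys_astar astar ws_uniq mem_ws beta_basis.
have bw_sum : (\sum_(a <- A | a != astar) node_bw gs a <= (n - 1) * (t - s))%N.
  apply: (@leq_trans (\sum_(a <- A | a != astar) (t - s))).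
    by apply: leq_sum => a; rewrite -dimW; apply: node_bw_check_polys_neq.
  by rewrite big_const_seq iter_addn_0 count_neq_uniq // mulnC subn1.
split=> // [|size_A redundancy D rho]; last exact: lin_repair_bandwidth_ge.
have q_gt0 : (0 < q ^ s)%N by rewrite expn_gt0 ltnW ?finNzRing_gt1.
have size_gs' g : g \in gs -> (size g + k <= size A)%N by move/size_gs; rewrite /r /n; lia.
have [D [rho [scheme size_D]]] := repair_scheme_of_checks A_uniq astar_A size_gs' bw_astar.
by exists D, rho; rewrite size_D.
Qed.
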